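(* Let $s_\beta$ be the base phi sum of digits function, and let $I_\beta$, $C_\beta$, $D_\beta$ (indexed from $1$) be the increasing enumerations of the points of increase, constancy, and decrease of $s_\beta$, respectively. Then: (i) $I_\beta(1)=0$, and $\Delta I_\beta$ is the fixed point of the morphism on $\{1,2,4\}$ given by $1\mapsto12$, $2\mapsto4$, $4\mapsto1244$; (ii) $C_\beta(1)=2$, and $\Delta C_\beta$ is the image under the letter-to-letter projection $1\mapsto1$, $2\mapsto2$, $3\mapsto3$, $3'\mapsto3$, $4\mapsto4$ of the fixed point (starting with $2$) of the morphism on $\{1,2,3,3',4\}$ given by $1\mapsto43$, $2\mapsto21$, $3\mapsto21$, $3'\mapsto13'43$, $4\mapsto13'4$; (iii) $D_\beta(1)=6$, and $\Delta D_\beta$ is the shift by one (i.e. the word obtained by deleting the first letter) of the fixed point of the morphism on $\{2,4,5,7\}$ given by $2\mapsto542$, $4\mapsto542$, $5\mapsto7$, $7\mapsto7542$.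
   Context: Let $\varphi=(1+\sqrt5)/2$. Every natural number $N$ can be written uniquely (ignoring leading and trailing zeros) as a finite sum $N=\sum_i d_i\varphi^i$ over integers $i$ (possibly negative), with $d_i\in\{0,1\}$ and no two consecutive digits both equal to $1$; $s_\beta(N)$ is the number of digits $1$, with $s_\beta(0)=0$. $N\ge0$ is a point of increase, constancy, or decrease of $s_\beta$ according as $s_\beta(N+1)-s_\beta(N)$ is $>0$, $=0$, or $<0$. For a sequence $V=(V(n))_{n\ge1}$, $\Delta V=(V(n+1)-V(n))_{n\ge1}$, viewed as an infinite word. The fixed point of a morphism $\mu$ starting with a letter $a$ (where $\mu(a)$ begins with $a$ and has length $\ge2$) is $\lim_n\mu^n(a)$; in (i) it starts with $1$, in (ii) with $2$, and in (iii) with $7$. *)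

From Stdlib Require Import Reals ZArith List ClassicalEpsilon.
Import ListNotations.
Open Scope R_scope.

Definition phi : R := (1 + sqrt 5) / 2.

(** A base-phi expansion is encoded by the (strictly increasing) list of
    exponents i at which the digit d_i equals 1.  No two consecutive
    digits equal to 1 means consecutive exponents differ by at least 2. *)
Fixpoint gapped (l : list Z) : Prop :=
  match l with
  | [] => True
  | i :: t => match t with
              | [] => True
              | j :: _ => (i + 2 <= j)%Z /\ gapped t
              end
  end.

Fixpoint phi_value (l : list Z) : R :=
  match l with
  | [] => 0
  | i :: t => powerRZ phi i + phi_value t
  end.

Definition is_phi_rep (N : nat) (l : list Z) : Prop :=
  gapped l /\ phi_value l = INR N.

Definition s_beta (N : nat) : nat :=
  length (epsilon (inhabits (@nil Z)) (is_phi_rep N)).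

Definition incp (N : nat) : bool := Nat.ltb (s_beta N) (s_beta (S N)).
Definition conp (N : nat) : bool := Nat.eqb (s_beta (S N)) (s_beta N).
Definition decp (N : nat) : bool := Nat.ltb (s_beta (S N)) (s_beta N).

Fixpoint count_below (P : nat -> bool) (n : nat) : nat :=
  match n with
  | 0 => 0
  | S m => count_below P m + (if P m then 1 else 0)
  end.

(** Increasing enumeration of {N | P N}, indexed from 1:
    enum1 P n is the N with P N such that exactly n-1 smaller m satisfy P. *)
Definition enum1 (P : nat -> bool) (n : nat) : nat :=
  epsilon (inhabits 0%nat)
    (fun N => P N = true /\ count_below P N = (n - 1)%nat).

Definition I_beta : nat -> nat := enum1 incp.
Definition C_beta : nat -> nat := enum1 conp.
Definition D_beta : nat -> nat := enum1 decp.

(** Delta V as an infinite word indexed from 0: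
    (Delta V)(k) = V(k+2) - V(k+1), i.e. position k holds V(n+1)-V(n) for n = k+1. *)
Definition DeltaW (V : nat -> nat) (k : nat) : Z :=
  (Z.of_nat (V (S (S k))) - Z.of_nat (V (S k)))%Z.

Definition morph_apply {A : Type} (mu : A -> list A) (w : list A) : list A :=
  flat_map mu w.

Fixpoint morph_iter {A : Type} (mu : A -> list A) (n : nat) (w : list A) : list A :=
  match n with
  | 0 => w
  | S m => morph_apply mu (morph_iter mu m w)
  end.

(** Fixed point lim_n mu^n(a), as an infinite word indexed from 0.
    For a non-erasing mu with mu(a) beginning with a and |mu(a)| >= 2,
    mu^n(a) is a prefix of mu^(n+1)(a) and has length >= n+1, so letter i
    of the limit is letter i of mu^(i+1)(a). *)
Definition fixpt {A : Type} (mu : A -> list A) (a : A) (i : nat) : A :=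
  nth i (morph_iter mu (S i) [a]) a.

Definition mu_I (x : nat) : list nat :=
  match x with
  | 1 => [1; 2]%nat
  | 2 => [4]%nat
  | 4 => [1; 2; 4; 4]%nat
  | _ => [x]
  end.

Inductive letC := C1 | C2 | C3 | C3' | C4.

Definition mu_C (x : letC) : list letC :=
  match x with
  | C1 => [C4; C3]
  | C2 => [C2; C1]
  | C3 => [C2; C1]
  | C3' => [C1; C3'; C4; C3]
  | C4 => [C1; C3'; C4]
  end.

Definition proj_C (x : letC) : nat :=
  match x with
  | C1 => 1 | C2 => 2 | C3 => 3 | C3' => 3 | C4 => 4
  end.

Definition mu_D (x : nat) : list nat :=
  match x with
  | 2 => [5; 4; 2]%nat
  | 4 => [5; 4; 2]%nat
  | 5 => [7]%nat
  | 7 => [7; 5; 4; 2]%nat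
  | _ => [x]
  end.

(* Expansions in base phi are built along Lucas blocks.  Since L(2k) = phi^(2k) + phi^(-2k),
   the expansion of L(2q+2) + j (j < L(2q+1)) is that of j framed by the exponents -(2q+2) and
   2q+2; in odd blocks (L(2n+1), L(2n+2)) the expansion is framed by -2n-2 and 2n+1, and the
   three sub-ranges of such a block reduce to smaller numbers in the same way.  By uniqueness
   of expansions, s_beta then shifts by a constant along each sub-block, so the sign sequence
   of s_beta(N+1) - s_beta(N) on [L(n+4)-1, L(n+5)-1) is a fixed coding of theta^n(a), where
   theta : a -> b, b -> c, c -> bab.  Cutting this sign word at the occurrences of one sign
   groups the gaps between consecutive points by pairs of adjacent blocks; on such pairs two
   steps of theta act like the morphism of the statement, so the gap sequence is its fixed
   point. *)

From Pilot Require Import Defs.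
From Stdlib Require Import Reals ZArith List Lia Lra ClassicalEpsilon.
Import ListNotations.

(** * Powers of the golden ratio and Lucas numbers *)

Local Open Scope R_scope.

Local Notation pw := (powerRZ phi).

Lemma phi_gt_1 : 1 < phi.
Proof.
  assert (H : 2 < sqrt 5).
  { rewrite <- (sqrt_square 2) by lra. apply sqrt_lt_1; lra. }
  unfold phi. lra.
Qed.

Lemma phi_sqr : phi * phi = phi + 1.
Proof.
  assert (H : sqrt 5 * sqrt 5 = 5) by (apply sqrt_sqrt; lra).
  unfold phi. nra.
Qed.

Lemma pw_pos z : 0 < pw z.
Proof. apply powerRZ_lt. pose proof phi_gt_1. lra. Qed.

Lemma pw_add a b : pw (a + b) = pw a * pw b.
Proof. apply powerRZ_add. pose proof phi_gt_1. lra. Qed.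

(* Stated with index equations, so that it applies to indices in any arithmetic form. *)
Lemma pw_fib a b c : (b = a + 1)%Z -> (c = a + 2)%Z -> pw c = pw b + pw a.
Proof.
  intros -> ->. rewrite !pw_add.
  replace (pw 2) with (phi * phi) by (simpl; ring).
  rewrite phi_sqr. simpl. ring.
Qed.

Lemma pw_ge_1 (n : nat) : 1 <= pw (Z.of_nat n).
Proof.
  induction n as [|n IH]; [simpl; lra|].
  rewrite Nat2Z.inj_succ, <- Z.add_1_r, pw_add.
  pose proof phi_gt_1. simpl. nra.
Qed.

Lemma pw_le_mono a b : (a <= b)%Z -> pw a <= pw b.
Proof.
  intros H. replace b with (a + Z.of_nat (Z.to_nat (b - a)))%Z by lia.
  rewrite pw_add. pose proof (pw_ge_1 (Z.to_nat (b - a))). pose proof (pw_pos a). nra.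
Qed.

Lemma pw_lt_mono a b : (a < b)%Z -> pw a < pw b.
Proof.
  intros H. pose proof (pw_fib (a - 1) a (a + 1) ltac:(lia) ltac:(lia)).
  pose proof (pw_pos (a - 1)). pose proof (pw_le_mono (a + 1) b ltac:(lia)). lra.
Qed.

Fixpoint lucas (n : nat) : nat :=
  match n with
  | O => 2
  | S m => match m with O => 1 | S p => lucas m + lucas p end
  end%nat.

Lemma lucas_fib a b c : b = S a -> c = S (S a) -> lucas c = (lucas b + lucas a)%nat.
Proof. intros -> ->. reflexivity. Qed.

Lemma lucas_binet n : INR (lucas n) = pw (Z.of_nat n) + (-1) ^ n * pw (- Z.of_nat n).
Proof.
  induction n as [n IH] using (well_founded_induction lt_wf).
  destruct n as [|[|n]].
  - simpl. lra.
  - assert (Hinv : / phi = phi - 1).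
    { pose proof phi_sqr. pose proof phi_gt_1.
      apply (Rmult_eq_reg_l phi); [|lra]. rewrite Rinv_r; lra. }
    simpl. rewrite Rmult_1_r, Hinv. lra.
  - rewrite (lucas_fib n (S n) (S (S n))), plus_INR, !IH by lia.
    rewrite (pw_fib (Z.of_nat n) (Z.of_nat (S n)) (Z.of_nat (S (S n)))) by lia.
    rewrite (pw_fib (- Z.of_nat (S (S n))) (- Z.of_nat (S n)) (- Z.of_nat n)) by lia.
    simpl. ring.
Qed.

Lemma lucas_even_pw n k a : k = (2 * n)%nat -> a = (2 * Z.of_nat n)%Z ->
  INR (lucas k) = pw a + pw (- a).
Proof.
  intros -> ->. rewrite lucas_binet, pow_1_even, Nat2Z.inj_mul. simpl (Z.of_nat 2). ring.
Qed.

Lemma lucas_odd_pw n k a : k = (2 * n + 1)%nat -> a = (2 * Z.of_nat n + 1)%Z ->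
  INR (lucas k) = pw a - pw (- a).
Proof.
  intros -> ->. rewrite lucas_binet, Nat.add_1_r, pow_1_odd.
  replace (Z.of_nat (S (2 * n))) with (2 * Z.of_nat n + 1)%Z by lia. ring.
Qed.

Local Open Scope nat_scope.

Lemma lucas_pos n : 1 <= lucas n.
Proof.
  induction n as [n IH] using (well_founded_induction lt_wf).
  destruct n as [|[|n]]; [simpl; lia ..|].
  rewrite (lucas_fib n (S n) (S (S n))) by lia. specialize (IH n ltac:(lia)). lia.
Qed.

Lemma lucas_lt a b : 1 <= a -> a < b -> lucas a < lucas b.
Proof.
  intros Ha Hab. induction Hab as [|b Hab IH].
  - destruct a as [|a]; [lia|].
    rewrite (lucas_fib a (S a) (S (S a))) by lia. pose proof (lucas_pos a). lia.
  - destruct b as [|b]; [lia|].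
    rewrite (lucas_fib b (S b) (S (S b))) by lia. pose proof (lucas_pos b). lia.
Qed.

Lemma lucas_le a b : 1 <= a -> a <= b -> lucas a <= lucas b.
Proof.
  intros Ha Hab. destruct (Nat.eq_dec a b) as [->|]; [lia|].
  pose proof (lucas_lt a b Ha ltac:(lia)). lia.
Qed.

Lemma lucas_ge_3 k : 2 <= k -> 3 <= lucas k.
Proof. intros H. exact (lucas_le 2 k ltac:(lia) H). Qed.

Lemma lucas_lt_cancel a b : 1 <= b -> lucas a < lucas b -> a < b.
Proof.
  intros Hb H. destruct (Nat.lt_ge_cases a b) as [|Hab]; auto.
  pose proof (lucas_le b a Hb Hab). lia.
Qed.

Lemma lucas_bracket N : 1 <= N -> exists k, 1 <= k /\ lucas k <= N < lucas (S k).
Proof.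
  induction N as [|N IH]; intros H; [lia|].
  destruct (Nat.eq_dec N 0) as [->|HN]; [exists 1; simpl; lia|].
  destruct (IH ltac:(lia)) as [k [Hk [H1 H2]]].
  destruct (Nat.eq_dec (S N) (lucas (S k))) as [E|E]; [|exists k; lia].
  exists (S k). pose proof (lucas_lt (S k) (S (S k)) ltac:(lia) ltac:(lia)). lia.
Qed.

Local Open Scope R_scope.

(** * Uniqueness of the expansion *)

Lemma phi_value_app l1 l2 : phi_value (l1 ++ l2) = phi_value l1 + phi_value l2.
Proof. induction l1 as [|x l1 IH]; simpl; [ring|]. rewrite IH. ring. Qed.

Lemma phi_value_nonneg l : 0 <= phi_value l.
Proof. induction l as [|x l IH]; simpl; [lra|]. pose proof (pw_pos x). lra. Qed.

Fixpoint gapped_within (a b : Z) (l : list Z) : Prop :=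
  match l with
  | [] => True
  | x :: t => (a <= x <= b)%Z /\ gapped_within (x + 2) b t
  end.

Lemma gapped_within_weaken a b a' b' l :
  gapped_within a b l -> (a' <= a)%Z -> (b <= b')%Z -> gapped_within a' b' l.
Proof.
  revert a a'. induction l as [|x l IH]; simpl; auto. intros a a' [H1 H2] H3 H4.
  split; [lia|]. eapply IH; eauto. lia.
Qed.

Lemma gapped_within_gapped a b l : gapped_within a b l -> gapped l.
Proof.
  revert a. induction l as [|x [|y t] IH]; simpl; auto. intros a [H1 [H2 H3]].
  split; [lia|]. apply (IH (x + 2)%Z). simpl. auto.
Qed.

Lemma gapped_within_app a b c l1 l2 :
  gapped_within a b l1 -> gapped_within (b + 2) c l2 -> (a <= b + 2)%Z -> (b <= c)%Z ->
  gapped_within a c (l1 ++ l2).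
Proof.
  revert a. induction l1 as [|x t IH]; simpl; intros a H1 H2 H3 H4.
  - eapply gapped_within_weaken; eauto; lia.
  - destruct H1 as [H5 H6]. split; [lia|]. apply IH; auto. lia.
Qed.

Lemma gapped_within_of_gapped x t :
  gapped (x :: t) -> gapped_within x (last (x :: t) 0%Z) (x :: t).
Proof.
  revert x. induction t as [|y t IH]; intros x H; [simpl; lia|].
  destruct H as [H1 H2]. specialize (IH y H2).
  change (last (x :: y :: t) 0%Z) with (last (y :: t) 0%Z).
  assert (y <= last (y :: t) 0)%Z by (destruct IH; lia).
  split; [lia|]. eapply gapped_within_weaken; eauto; lia.
Qed.

(* A gapped sum of powers in [a, b] is dominated by the alternating sum that telescopes. *)
Lemma phi_value_gapped_within_le a b l :
  gapped_within a b l -> (a <= b + 2)%Z -> phi_value l <= pw (b + 1) - pw (a - 1).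
Proof.
  revert a. induction l as [|x t IH]; simpl; intros a H Hab.
  - pose proof (pw_le_mono (a - 1) (b + 1) ltac:(lia)). lra.
  - destruct H as [[H1 H2] H3]. specialize (IH (x + 2)%Z H3 ltac:(lia)).
    replace (x + 2 - 1)%Z with (x + 1)%Z in IH by lia.
    pose proof (pw_fib (x - 1) x (x + 1) ltac:(lia) ltac:(lia)).
    pose proof (pw_le_mono (a - 1) (x - 1) ltac:(lia)). lra.
Qed.

Lemma gapped_removelast l M : gapped (l ++ [M]) -> gapped l.
Proof.
  induction l as [|x [|y t] IH]; simpl; auto. intros [H1 H2]. split; [exact H1|]. apply IH, H2.
Qed.

Lemma phi_value_gapped_lt_last l M : gapped (l ++ [M]) -> phi_value (l ++ [M]) < pw (M + 1).
Proof.
  intros H. destruct l as [|x t].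
  - simpl. pose proof (pw_lt_mono M (M + 1) ltac:(lia)). lra.
  - pose proof (gapped_within_of_gapped x (t ++ [M]) H) as G.
    rewrite app_comm_cons, last_last in G.
    assert (x <= M)%Z by (destruct G as [G1 _]; lia).
    pose proof (phi_value_gapped_within_le _ _ _ G ltac:(lia)). pose proof (pw_pos (x - 1)). lra.
Qed.

Lemma gapped_phi_value_inj l1 l2 :
  gapped l1 -> gapped l2 -> phi_value l1 = phi_value l2 -> l1 = l2.
Proof.
  remember (length l1 + length l2)%nat as n eqn:Hn. revert l1 l2 Hn.
  induction n as [n IH] using (well_founded_induction lt_wf).
  intros l1 l2 Hn G1 G2 HV.
  destruct l1 as [|x1 t1] using rev_ind; destruct l2 as [|x2 t2] using rev_ind; auto;
    rewrite ?phi_value_app in HV; simpl in HV.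
  - pose proof (phi_value_nonneg t2). pose proof (pw_pos x2). lra.
  - pose proof (phi_value_nonneg t1). pose proof (pw_pos x1). lra.
  - assert (M1 := phi_value_gapped_lt_last _ _ G1). assert (M2 := phi_value_gapped_lt_last _ _ G2).
    rewrite phi_value_app in M1, M2. simpl in M1, M2.
    pose proof (phi_value_nonneg t1). pose proof (phi_value_nonneg t2).
    assert (x1 = x2) as <-.
    { destruct (Z.lt_trichotomy x1 x2) as [Hl|[He|Hl]]; auto; exfalso.
      - pose proof (pw_le_mono (x1 + 1) x2 ltac:(lia)). lra.
      - pose proof (pw_le_mono (x2 + 1) x1 ltac:(lia)). lra. }
    f_equal. rewrite !length_app in Hn. simpl in Hn.
    apply (IH (length t1 + length t2)%nat ltac:(lia) t1 t2 eq_refl);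
      [eapply gapped_removelast; eauto .. | lra].
Qed.

Lemma s_beta_of_rep N l : is_phi_rep N l -> s_beta N = length l.
Proof.
  intros H. unfold s_beta.
  destruct (epsilon_spec (inhabits (@nil Z)) (is_phi_rep N) (ex_intro _ l H)) as [G V].
  destruct H as [G' V']. f_equal. apply gapped_phi_value_inj; congruence.
Qed.

(** * Expansions along Lucas blocks *)

Fixpoint alternating (x : Z) (k : nat) : list Z :=
  match k with O => [] | S k' => x :: alternating (x + 2) k' end.

Lemma length_alternating x k : length (alternating x k) = k.
Proof. revert x; induction k; simpl; auto. Qed.

Lemma gapped_within_alternating a b x k :
  (a <= x)%Z -> (x + 2 * Z.of_nat k - 2 <= b)%Z -> gapped_within a b (alternating x k).
Proof. revert a x; induction k as [|k IH]; intros a x H1 H2; simpl; auto. split; [lia|]. apply IH; lia. Qed.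

Lemma phi_value_alternating x k :
  phi_value (alternating x k) = pw (x + 2 * Z.of_nat k - 1) - pw (x - 1).
Proof.
  revert x; induction k as [|k IH]; intros x; simpl alternating; simpl phi_value.
  - replace (x + 2 * Z.of_nat 0 - 1)%Z with (x - 1)%Z by lia. ring.
  - rewrite IH. replace (x + 2 + 2 * Z.of_nat k - 1)%Z with (x + 2 * Z.of_nat (S k) - 1)%Z by lia.
    replace (x + 2 - 1)%Z with (x + 1)%Z by lia.
    pose proof (pw_fib (x - 1) x (x + 1) ltac:(lia) ltac:(lia)). lra.
Qed.

Local Open Scope Z_scope.

Lemma gapped_within_snoc a b l y :
  gapped_within a (y - 2) l -> (a <= y <= b)%Z -> gapped_within a b (l ++ [y]).
Proof.
  intros H1 H2. apply gapped_within_app with (b := (y - 2)%Z); simpl; auto; lia.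
Qed.

Lemma gapped_within_frame a b x y m :
  gapped_within (x + 2) (y - 2) m -> (a <= x)%Z -> (x + 2 <= y <= b)%Z ->
  gapped_within a b ([x] ++ m ++ [y]).
Proof. intros H1 H2 H3. cbn [gapped_within app]. split; [lia|]. apply gapped_within_snoc; auto; lia. Qed.

Definition even_frame (n : nat) (m : list Z) : list Z :=
  [- (2 * Z.of_nat n)] ++ m ++ [2 * Z.of_nat n].

Definition odd_frame (n : nat) (m : list Z) : list Z :=
  [- (2 * Z.of_nat n) - 2] ++ m ++ [2 * Z.of_nat n + 1].

Lemma odd_frame_at n a b m : a = (- (2 * Z.of_nat n) - 2)%Z -> b = (2 * Z.of_nat n + 1)%Z ->
  odd_frame n m = [a] ++ m ++ [b].
Proof. intros -> ->. reflexivity. Qed.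

Lemma rep_even_block q j l :
  is_phi_rep j l -> gapped_within (- (2 * Z.of_nat q)) (2 * Z.of_nat q) l ->
  is_phi_rep (lucas (2 * q + 2) + j)%nat (even_frame (S q) l).
Proof.
  intros [_ V] B. split.
  - apply (gapped_within_gapped (- (2 * Z.of_nat (S q))) (2 * Z.of_nat (S q))).
    apply gapped_within_frame; [eapply gapped_within_weaken; eauto|..]; lia.
  - unfold even_frame. rewrite !phi_value_app, plus_INR, V.
    rewrite (lucas_even_pw (S q) (2 * q + 2) (2 * Z.of_nat (S q))) by lia. simpl. ring.
Qed.

Lemma rep_lucas_odd n : is_phi_rep (lucas (2 * n + 1)%nat) (alternating (- (2 * Z.of_nat n)) (2 * n + 1)).
Proof.
  split.
  - apply (gapped_within_gapped (- (2 * Z.of_nat n)) (2 * Z.of_nat n)), gapped_within_alternating; lia.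
  - rewrite phi_value_alternating, (lucas_odd_pw n _ (2 * Z.of_nat n + 1)) by lia.
    replace (- (2 * Z.of_nat n) + 2 * Z.of_nat (2 * n + 1) - 1)%Z with (2 * Z.of_nat n + 1)%Z by lia.
    replace (- (2 * Z.of_nat n) - 1)%Z with (- (2 * Z.of_nat n + 1))%Z by lia. ring.
Qed.

Lemma is_phi_rep_odd_frame n N m :
  gapped_within (- (2 * Z.of_nat n) + 1) (2 * Z.of_nat n - 1) m ->
  phi_value (odd_frame n m) = INR N -> is_phi_rep N (odd_frame n m).
Proof.
  intros B V. split; [|exact V].
  apply (gapped_within_gapped (- (2 * Z.of_nat n) - 2) (2 * Z.of_nat n + 1)).
  apply gapped_within_frame; [eapply gapped_within_weaken; eauto|..]; lia.
Qed.

Section OddBlock.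
Variable p : nat.
Let z := Z.of_nat p.
Let z_nonneg : 0 <= z := Nat2Z.is_nonneg p.

Let odd_frame_S m : odd_frame (S p) m = [- 2 * z - 4] ++ m ++ [2 * z + 3].
Proof. apply odd_frame_at; unfold z; lia. Qed.

Let odd_frame_SS m : odd_frame (S (S p)) m = [- 2 * z - 6] ++ m ++ [2 * z + 5].
Proof. apply odd_frame_at; unfold z; lia. Qed.

Let lucas_2p2 : INR (lucas (2 * p + 2)) = (pw (2 * z + 2) + pw (- 2 * z - 2))%R.
Proof.
  rewrite (lucas_even_pw (S p) _ (2 * z + 2)) by (unfold z; lia).
  replace (- 2 * z - 2) with (- (2 * z + 2)) by lia. reflexivity.
Qed.

Let lucas_2p3 : INR (lucas (2 * p + 3)) = (pw (2 * z + 3) - pw (- 2 * z - 3))%R.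
Proof.
  rewrite (lucas_odd_pw (S p) _ (2 * z + 3)) by (unfold z; lia).
  replace (- 2 * z - 3) with (- (2 * z + 3)) by lia. reflexivity.
Qed.

Let lucas_2p5 : INR (lucas (2 * p + 5)) = (pw (2 * z + 5) - pw (- 2 * z - 5))%R.
Proof.
  rewrite (lucas_odd_pw (S (S p)) _ (2 * z + 5)) by (unfold z; lia).
  replace (- 2 * z - 5) with (- (2 * z + 5)) by lia. reflexivity.
Qed.

Let fib_low : pw (- 2 * z - 4) = (pw (- 2 * z - 5) + pw (- 2 * z - 6))%R.
Proof. apply pw_fib; lia. Qed.

Lemma odd_inner_low m :
  gapped_within (- 2 * z - 1) (2 * z + 1) m -> gapped_within (- 2 * z - 3) (2 * z + 3) ([- 2 * z - 3] ++ m).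
Proof. intros B. cbn [gapped_within app]. split; [lia|]. eapply gapped_within_weaken; eauto; lia. Qed.

Lemma odd_inner_high m :
  gapped_within (- 2 * z - 1) (2 * z + 1) m -> gapped_within (- 2 * z - 3) (2 * z + 3) (m ++ [2 * z + 3]).
Proof. intros B. apply gapped_within_snoc; [eapply gapped_within_weaken; eauto|]; lia. Qed.

Lemma odd_inner_mid l :
  gapped_within (- (2 * z)) (2 * z) l ->
  gapped_within (- 2 * z - 3) (2 * z + 3) ([- 2 * z - 3] ++ l ++ [2 * z + 2]).
Proof. intros B. apply gapped_within_frame; [eapply gapped_within_weaken; eauto|..]; lia. Qed.

Lemma rep_odd_low j m :
  is_phi_rep (lucas (2 * p + 3) + j) (odd_frame (S p) m) ->
  gapped_within (- 2 * z - 1) (2 * z + 1) m ->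
  is_phi_rep (lucas (2 * p + 5) + j) (odd_frame (S (S p)) ([- 2 * z - 3] ++ m)).
Proof.
  intros [_ V] B. apply is_phi_rep_odd_frame.
  - eapply gapped_within_weaken; [apply odd_inner_low; exact B|..]; unfold z; lia.
  - rewrite odd_frame_S in V. rewrite odd_frame_SS.
    rewrite !phi_value_app, plus_INR in *. cbn [phi_value] in *.
    rewrite lucas_2p5. rewrite lucas_2p3 in V. pose proof fib_low. lra.
Qed.

Lemma rep_odd_high j m :
  is_phi_rep (lucas (2 * p + 3) + j) (odd_frame (S p) m) ->
  gapped_within (- 2 * z - 1) (2 * z + 1) m ->
  is_phi_rep (lucas (2 * p + 5) + lucas (2 * p + 3) + j) (odd_frame (S (S p)) (m ++ [2 * z + 3])).
Proof.
  intros [_ V] B. apply is_phi_rep_odd_frame.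
  - eapply gapped_within_weaken; [apply odd_inner_high; exact B|..]; unfold z; lia.
  - rewrite odd_frame_S in V. rewrite odd_frame_SS.
    rewrite !phi_value_app, !plus_INR in *. cbn [phi_value] in *.
    rewrite lucas_2p5, lucas_2p3. rewrite lucas_2p3 in V. pose proof fib_low. lra.
Qed.

Lemma rep_odd_mid i l :
  is_phi_rep i l -> gapped_within (- (2 * z)) (2 * z) l ->
  is_phi_rep (lucas (2 * p + 5) + lucas (2 * p + 2) + i)
    (odd_frame (S (S p)) ([- 2 * z - 3] ++ l ++ [2 * z + 2])).
Proof.
  intros [_ V] B. apply is_phi_rep_odd_frame.
  - eapply gapped_within_weaken; [apply odd_inner_mid; exact B|..]; unfold z; lia.
  - rewrite odd_frame_SS, !phi_value_app, !plus_INR, V, lucas_2p5, lucas_2p2. cbn [phi_value].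
    pose proof fib_low. pose proof (pw_fib (- 2 * z - 4) (- 2 * z - 3) (- 2 * z - 2) ltac:(lia) ltac:(lia)).
    lra.
Qed.

End OddBlock.

Local Open Scope nat_scope.

Definition lucas_bounded (N : nat) (l : list Z) : Prop :=
  forall k, N <= lucas (2 * k + 1) -> gapped_within (- (2 * Z.of_nat k)) (2 * Z.of_nat k) l.

Definition odd_block_shape (N : nat) (l : list Z) : Prop :=
  forall n, lucas (2 * n + 1) < N < lucas (2 * n + 2) ->
  exists m, l = odd_frame n m /\ gapped_within (- (2 * Z.of_nat n) + 1) (2 * Z.of_nat n - 1) m.

(* The two invariants that let expansions of smaller numbers be reused inside larger ones. *)
Definition structured_rep (N : nat) (l : list Z) : Prop :=
  is_phi_rep N l /\ lucas_bounded N l /\ odd_block_shape N l.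

Lemma structured_rep_0 : structured_rep 0 [].
Proof.
  split; [split; simpl; auto|split].
  - intros k _. simpl. auto.
  - intros n Hn. pose proof (lucas_pos (2 * n + 1)). lia.
Qed.

Lemma structured_rep_even_block q j l :
  structured_rep j l -> j < lucas (2 * q + 1) ->
  structured_rep (lucas (2 * q + 2) + j) (even_frame (S q) l).
Proof.
  intros [R [B _]] Hj. pose proof (B q ltac:(lia)) as Bq.
  pose proof (lucas_lt (2 * q + 1) (2 * q + 2) ltac:(lia) ltac:(lia)).
  pose proof (lucas_fib (2 * q + 1) (2 * q + 2) (2 * q + 3) ltac:(lia) ltac:(lia)).
  split; [|split].
  - apply rep_even_block; auto.
  - intros k Hk. assert (2 * q + 1 < 2 * k + 1) by (apply lucas_lt_cancel; lia).
    apply gapped_within_frame; [eapply gapped_within_weaken; eauto|..]; lia.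
  - intros n Hn. exfalso.
    assert (2 * q + 2 < 2 * n + 2) by (apply lucas_lt_cancel; lia).
    assert (2 * n + 1 < 2 * q + 3) by (apply lucas_lt_cancel; lia). lia.
Qed.

Lemma structured_rep_lucas_odd n :
  structured_rep (lucas (2 * n + 1)) (alternating (- (2 * Z.of_nat n)) (2 * n + 1)).
Proof.
  split; [apply rep_lucas_odd|split].
  - intros k Hk. assert (2 * n + 1 <= 2 * k + 1).
    { destruct (Nat.lt_ge_cases (2 * k + 1) (2 * n + 1)) as [H|]; auto.
      pose proof (lucas_lt (2 * k + 1) _ ltac:(lia) H). lia. }
    apply gapped_within_alternating; lia.
  - intros n' Hn'. exfalso.
    assert (2 * n' + 1 < 2 * n + 1) by (apply lucas_lt_cancel; lia).
    assert (2 * n + 1 < 2 * n' + 2) by (apply lucas_lt_cancel; lia). lia.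
Qed.

Lemma structured_rep_odd_frame n N m :
  is_phi_rep N (odd_frame n m) -> lucas (2 * n + 1) < N < lucas (2 * n + 2) ->
  gapped_within (- (2 * Z.of_nat n) + 1) (2 * Z.of_nat n - 1) m ->
  structured_rep N (odd_frame n m).
Proof.
  intros R HN B. split; [exact R|split].
  - intros k Hk. assert (2 * n + 1 < 2 * k + 1) by (apply lucas_lt_cancel; lia).
    apply gapped_within_frame; [eapply gapped_within_weaken; eauto|..]; lia.
  - intros n' Hn'.
    assert (2 * n' + 1 < 2 * n + 2) by (apply lucas_lt_cancel; lia).
    assert (2 * n + 1 < 2 * n' + 2) by (apply lucas_lt_cancel; lia).
    replace n' with n by lia. eauto.
Qed.

Lemma phi_value_odd_frame n m :
  phi_value (odd_frame n m) = (INR (lucas (2 * n + 1)) + pw (- (2 * Z.of_nat n)) + phi_value m)%R.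
Proof.
  unfold odd_frame. rewrite !phi_value_app, (lucas_odd_pw n _ (2 * Z.of_nat n + 1)) by lia.
  cbn [phi_value].
  replace (- (2 * Z.of_nat n + 1))%Z with (- (2 * Z.of_nat n) - 1)%Z by lia.
  pose proof (pw_fib (- (2 * Z.of_nat n) - 2) (- (2 * Z.of_nat n) - 1) (- (2 * Z.of_nat n))
                ltac:(lia) ltac:(lia)). lra.
Qed.

Lemma rep_small_odd_blocks :
  is_phi_rep 2 (odd_frame 0 []) /\ is_phi_rep 5 (odd_frame 1 [(-1)%Z]) /\
  is_phi_rep 6 (odd_frame 1 [1%Z]).
Proof.
  assert (pw 0 = 1)%R by reflexivity.
  assert (pw 1 = pw 0 + pw (-1))%R by (apply pw_fib; lia).
  assert (pw 0 = pw (-1) + pw (-2))%R by (apply pw_fib; lia).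
  repeat split; try (simpl; lia); rewrite phi_value_odd_frame; cbn -[powerRZ]; lra.
Qed.

Lemma structured_rep_small_odd_blocks N :
  lucas 1 < N < lucas 2 \/ lucas 3 < N < lucas 4 -> exists l, structured_rep N l.
Proof.
  destruct rep_small_odd_blocks as [R2 [R5 R6]].
  simpl. intros [HN|HN]; [assert (N = 2) as -> by lia | assert (N = 5 \/ N = 6) as [-> | ->] by lia].
  - eexists. apply (structured_rep_odd_frame 0); [exact R2|simpl..]; lia.
  - eexists. apply (structured_rep_odd_frame 1); [exact R5|simpl..]; lia.
  - eexists. apply (structured_rep_odd_frame 1); [exact R6|simpl..]; lia.
Qed.

Lemma structured_rep_odd_core p j l :
  structured_rep (lucas (2 * p + 3) + j) l -> 1 <= j < lucas (2 * p + 2) ->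
  exists m, l = odd_frame (S p) m /\
            gapped_within (- 2 * Z.of_nat p - 1) (2 * Z.of_nat p + 1) m.
Proof.
  intros [_ [_ O]] Hj.
  destruct (O (S p)) as [m [-> B]].
  - replace (2 * S p + 1) with (2 * p + 3) by lia. replace (2 * S p + 2) with (2 * p + 4) by lia.
    rewrite (lucas_fib (2 * p + 2) (2 * p + 3) (2 * p + 4)) by lia. lia.
  - exists m. split; auto. eapply gapped_within_weaken; eauto; lia.
Qed.

Lemma structured_rep_odd_block p N :
  (forall N', N' < N -> exists l, structured_rep N' l) ->
  lucas (2 * p + 5) < N < lucas (2 * p + 6) -> exists l, structured_rep N l.
Proof.
  intros IH HN.
  pose proof (lucas_fib (2 * p + 1) (2 * p + 2) (2 * p + 3) ltac:(lia) ltac:(lia)).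
  pose proof (lucas_fib (2 * p + 2) (2 * p + 3) (2 * p + 4) ltac:(lia) ltac:(lia)).
  pose proof (lucas_fib (2 * p + 3) (2 * p + 4) (2 * p + 5) ltac:(lia) ltac:(lia)).
  pose proof (lucas_fib (2 * p + 4) (2 * p + 5) (2 * p + 6) ltac:(lia) ltac:(lia)).
  pose proof (lucas_pos (2 * p + 1)). pose proof (lucas_pos (2 * p + 2)).
  assert (HN' : lucas (2 * S (S p) + 1) < N < lucas (2 * S (S p) + 2)).
  { replace (2 * S (S p) + 1) with (2 * p + 5) by lia.
    replace (2 * S (S p) + 2) with (2 * p + 6) by lia. exact HN. }
  destruct (Nat.le_exists_sub (lucas (2 * p + 5)) N ltac:(lia)) as [j [-> _]].
  destruct (Nat.lt_ge_cases j (lucas (2 * p + 2))) as [J1|J1];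
    [|destruct (Nat.le_gt_cases j (lucas (2 * p + 3))) as [J2|J2]].
  - destruct (IH (lucas (2 * p + 3) + j)) as [l R]; [lia|].
    destruct (structured_rep_odd_core p j l R ltac:(lia)) as [m [-> B]].
    eexists. apply structured_rep_odd_frame; [|exact HN'|].
    + rewrite Nat.add_comm. apply rep_odd_low; [exact (proj1 R) | exact B].
    + eapply gapped_within_weaken; [apply odd_inner_low, B|..]; lia.
  - destruct (Nat.le_exists_sub (lucas (2 * p + 2)) j J1) as [i [-> _]].
    destruct (IH i) as [l [R [Bd _]]]; [lia|].
    pose proof (Bd p ltac:(lia)) as B.
    eexists. apply structured_rep_odd_frame; [|exact HN'|].
    + replace (i + lucas (2 * p + 2) + lucas (2 * p + 5))
        with (lucas (2 * p + 5) + lucas (2 * p + 2) + i) by lia.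
      apply rep_odd_mid; [exact R | eapply gapped_within_weaken; eauto; lia].
    + eapply gapped_within_weaken; [apply odd_inner_mid; eapply gapped_within_weaken; eauto|..]; lia.
  - destruct (Nat.le_exists_sub (lucas (2 * p + 3)) j ltac:(lia)) as [j' [-> _]].
    destruct (IH (lucas (2 * p + 3) + j')) as [l R]; [lia|].
    destruct (structured_rep_odd_core p j' l R ltac:(lia)) as [m [-> B]].
    eexists. apply structured_rep_odd_frame; [|exact HN'|].
    + replace (j' + lucas (2 * p + 3) + lucas (2 * p + 5))
        with (lucas (2 * p + 5) + lucas (2 * p + 3) + j') by lia.
      apply rep_odd_high; [exact (proj1 R) | exact B].
    + eapply gapped_within_weaken; [apply odd_inner_high, B|..]; lia.
Qed.

Theorem structured_rep_exists N : exists l, structured_rep N l.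
Proof.
  induction N as [N IH] using (well_founded_induction lt_wf).
  destruct (Nat.eq_dec N 0) as [->|HN0]; [exists []; apply structured_rep_0|].
  destruct (lucas_bracket N ltac:(lia)) as [k [Hk HN]].
  destruct (Nat.Even_or_Odd k) as [[q ->]|[n ->]].
  - destruct q as [|q]; [lia|].
    pose proof (lucas_fib (2 * q + 1) (2 * q + 2) (2 * q + 3) ltac:(lia) ltac:(lia)).
    replace (S (2 * S q)) with (2 * q + 3) in HN by lia. replace (2 * S q) with (2 * q + 2) in HN by lia.
    destruct (Nat.le_exists_sub (lucas (2 * q + 2)) N ltac:(lia)) as [j [-> _]].
    destruct (IH j) as [l R]; [pose proof (lucas_pos (2 * q + 2)); lia|].
    exists (even_frame (S q) l). rewrite Nat.add_comm. apply structured_rep_even_block; [exact R|lia].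
  - destruct (Nat.eq_dec N (lucas (2 * n + 1))) as [->|HNe]; [eexists; apply structured_rep_lucas_odd|].
    replace (S (2 * n + 1)) with (2 * n + 2) in HN by lia.
    destruct n as [|[|p]].
    + apply structured_rep_small_odd_blocks. simpl in *. lia.
    + apply structured_rep_small_odd_blocks. simpl in *. lia.
    + apply (structured_rep_odd_block p); auto.
      replace (2 * S (S p) + 1) with (2 * p + 5) in * by lia.
      replace (2 * S (S p) + 2) with (2 * p + 6) in HN by lia. lia.
Qed.

(** * Recurrences for s_beta *)

Lemma s_beta_even_block q j : j < lucas (2 * q + 1) -> s_beta (lucas (2 * q + 2) + j) = 2 + s_beta j.
Proof.
  intros Hj. destruct (structured_rep_exists j) as [l [R [B _]]].
  rewrite (s_beta_of_rep _ _ (rep_even_block q j l R (B q ltac:(lia)))), (s_beta_of_rep _ _ R).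
  unfold even_frame. rewrite !length_app. simpl. lia.
Qed.

Lemma s_beta_lucas_odd n : s_beta (lucas (2 * n + 1)) = 2 * n + 1.
Proof. rewrite (s_beta_of_rep _ _ (rep_lucas_odd n)). apply length_alternating. Qed.

Lemma rep_odd_core p j : 1 <= j < lucas (2 * p + 2) ->
  exists m, is_phi_rep (lucas (2 * p + 3) + j) (odd_frame (S p) m) /\
            gapped_within (- 2 * Z.of_nat p - 1) (2 * Z.of_nat p + 1) m.
Proof.
  intros Hj. destruct (structured_rep_exists (lucas (2 * p + 3) + j)) as [l R].
  destruct (structured_rep_odd_core p j l R Hj) as [m [-> B]]. exists m. split; [apply R | exact B].
Qed.

Lemma s_beta_odd_low p j : 1 <= j < lucas (2 * p + 2) ->
  s_beta (lucas (2 * p + 5) + j) = 1 + s_beta (lucas (2 * p + 3) + j).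
Proof.
  intros Hj. destruct (rep_odd_core p j Hj) as [m [R B]].
  rewrite (s_beta_of_rep _ _ (rep_odd_low p j m R B)), (s_beta_of_rep _ _ R).
  unfold odd_frame. rewrite !length_app. simpl. lia.
Qed.

Lemma s_beta_odd_high p j : 1 <= j < lucas (2 * p + 2) ->
  s_beta (lucas (2 * p + 5) + lucas (2 * p + 3) + j) = 1 + s_beta (lucas (2 * p + 3) + j).
Proof.
  intros Hj. destruct (rep_odd_core p j Hj) as [m [R B]].
  rewrite (s_beta_of_rep _ _ (rep_odd_high p j m R B)), (s_beta_of_rep _ _ R).
  unfold odd_frame. rewrite !length_app. simpl. lia.
Qed.

Lemma s_beta_odd_mid p i : i <= lucas (2 * p + 1) ->
  s_beta (lucas (2 * p + 5) + lucas (2 * p + 2) + i) = 4 + s_beta i.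
Proof.
  intros Hi. destruct (structured_rep_exists i) as [l [R [B _]]].
  rewrite (s_beta_of_rep _ _ (rep_odd_mid p i l R (B p Hi))), (s_beta_of_rep _ _ R).
  unfold odd_frame. rewrite !length_app. simpl. lia.
Qed.

Lemma s_beta_0 : s_beta 0 = 0.
Proof. apply (s_beta_of_rep 0 []). split; simpl; auto. Qed.

Lemma s_beta_small_odd_blocks : s_beta 2 = 2 /\ s_beta 5 = 3 /\ s_beta 6 = 3.
Proof.
  destruct rep_small_odd_blocks as [R2 [R5 R6]].
  rewrite (s_beta_of_rep _ _ R2), (s_beta_of_rep _ _ R5), (s_beta_of_rep _ _ R6). auto.
Qed.

Lemma s_beta_pred_lucas_odd m : s_beta (lucas (2 * m + 1) - 1) = 2 * m.
Proof.
  induction m as [|m IH]; [apply s_beta_0|].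
  rewrite (lucas_fib (2 * m + 1) (2 * m + 2) (2 * S m + 1)) by lia.
  pose proof (lucas_pos (2 * m + 1)).
  replace (lucas (2 * m + 2) + lucas (2 * m + 1) - 1)
    with (lucas (2 * m + 2) + (lucas (2 * m + 1) - 1)) by lia.
  rewrite s_beta_even_block, IH by lia. lia.
Qed.

Lemma s_beta_pred_lucas_even m : s_beta (lucas (2 * m + 2) - 1) = m + 2.
Proof.
  induction m as [m IH] using (well_founded_induction lt_wf).
  destruct m as [|[|p]]; [apply s_beta_small_odd_blocks ..|].
  pose proof (lucas_fib (2 * p + 2) (2 * p + 3) (2 * p + 4) ltac:(lia) ltac:(lia)).
  pose proof (lucas_fib (2 * p + 4) (2 * p + 5) (2 * S (S p) + 2) ltac:(lia) ltac:(lia)).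
  pose proof (lucas_ge_3 (2 * p + 2) ltac:(lia)).
  specialize (IH (S p) ltac:(lia)). replace (2 * S p + 2) with (2 * p + 4) in IH by lia.
  replace (lucas (2 * S (S p) + 2) - 1)
    with (lucas (2 * p + 5) + lucas (2 * p + 3) + (lucas (2 * p + 2) - 1)) by lia.
  rewrite s_beta_odd_high by lia.
  replace (lucas (2 * p + 3) + (lucas (2 * p + 2) - 1)) with (lucas (2 * p + 4) - 1) by lia. lia.
Qed.

Lemma s_beta_succ_lucas_odd m : 1 <= m -> s_beta (lucas (2 * m + 1) + 1) = m + 2.
Proof.
  intros Hm. induction m as [|[|p] IH]; [lia|apply s_beta_small_odd_blocks|].
  replace (2 * S (S p) + 1) with (2 * p + 5) by lia.
  pose proof (lucas_ge_3 (2 * p + 2) ltac:(lia)).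
  rewrite s_beta_odd_low by lia. replace (2 * S p + 1) with (2 * p + 3) in IH by lia.
  rewrite IH by lia. lia.
Qed.

Local Ltac pose_upto f n :=
  pose proof (f n); lazymatch n with 0 => idtac | S ?m => pose_upto f m end.

(* Each value comes from a block recurrence at concrete indices; lia solves the resulting system. *)
Lemma s_beta_upto_29 N : N < 30 ->
  s_beta N = nth N [0;1;2;2;3;3;3;2;3;4;4;5;4;4;4;5;4;4;2;3;4;4;5;5;5;4;5;6;6;7] 0.
Proof.
  pose proof s_beta_0. destruct s_beta_small_odd_blocks as (? & ? & ?).
  pose_upto s_beta_lucas_odd 3.
  pose_upto (s_beta_even_block 0) 0. pose_upto (s_beta_even_block 1) 3.
  pose_upto (s_beta_even_block 2) 10.
  pose_upto (s_beta_odd_low 0) 2. pose_upto (s_beta_odd_mid 0) 1. pose_upto (s_beta_odd_high 0) 2.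
  cbn -[s_beta] in *.
  repeat match goal with H : ?P -> _ |- _ => specialize (H ltac:(lia)) end.
  intros HN. do 30 (destruct N as [|N]; [cbn; lia|]). lia.
Qed.

(** * The sign word of s_beta *)

Definition trend (N : nat) : comparison := s_beta (S N) ?= s_beta N.

Lemma compare_add_l c a b : (c + a ?= c + b) = (a ?= b).
Proof. induction c; auto. Qed.

Lemma trend_shift c a b :
  s_beta a = c + s_beta b -> s_beta (S a) = c + s_beta (S b) -> trend a = trend b.
Proof. intros H1 H2. unfold trend. rewrite H1, H2. apply compare_add_l. Qed.

Lemma trend_up N : s_beta N < s_beta (S N) -> trend N = Gt.
Proof. intros H. apply Nat.compare_gt_iff, H. Qed.

Lemma trend_down N : s_beta (S N) < s_beta N -> trend N = Lt.
Proof. intros H. apply Nat.compare_lt_iff, H. Qed.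

Lemma trend_upto_27 N : N < 28 ->
  trend N = nth N [Gt;Gt;Eq;Gt;Eq;Eq;Lt;Gt;Gt;Eq;Gt;Lt;Eq;Eq;Gt;Lt;Eq;Lt;Gt;Gt;Eq;Gt;Eq;Eq;Lt;Gt;Gt;Eq] Eq.
Proof.
  intros HN. unfold trend. rewrite !s_beta_upto_29 by lia.
  do 28 (destruct N as [|N]; [reflexivity|]). lia.
Qed.

Lemma trend_even_block q j : j + 1 < lucas (2 * q + 1) -> trend (lucas (2 * q + 2) + j) = trend j.
Proof.
  intros H. apply (trend_shift 2); rewrite <- ?Nat.add_succ_r; apply s_beta_even_block; lia.
Qed.

Lemma trend_pred_lucas_even q : 1 <= q -> trend (lucas (2 * q + 2) - 1) = Lt.
Proof.
  intros Hq. apply trend_down. pose proof (lucas_pos (2 * q + 1)).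
  replace (S (lucas (2 * q + 2) - 1)) with (lucas (2 * q + 2) + 0) by (pose proof (lucas_pos (2 * q + 2)); lia).
  rewrite s_beta_even_block, s_beta_0, s_beta_pred_lucas_even; lia.
Qed.

Lemma trend_pred_lucas_odd n : trend (lucas (2 * n + 1) - 1) = Gt.
Proof.
  pose proof (lucas_pos (2 * n + 1)). apply trend_up.
  replace (S (lucas (2 * n + 1) - 1)) with (lucas (2 * n + 1)) by lia.
  rewrite s_beta_pred_lucas_odd, s_beta_lucas_odd. lia.
Qed.

Lemma trend_lucas_odd n : 2 <= n -> trend (lucas (2 * n + 1)) = Lt.
Proof.
  intros Hn. apply trend_down. rewrite <- Nat.add_1_r, s_beta_succ_lucas_odd, s_beta_lucas_odd; lia.
Qed.

Section EvenCopy.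
Variable q : nat.
Hypothesis Hq : 1 <= q.

Lemma trend_copy_head_even i : i < lucas (2 * q + 1) ->
  trend (lucas (2 * q + 4) - 1 + i) = trend (lucas (2 * q + 2) - 1 + i).
Proof.
  intros Hi. pose proof (lucas_pos (2 * q + 2)). pose proof (lucas_pos (2 * q + 4)).
  pose proof (lucas_fib (2 * q + 1) (2 * q + 2) (2 * q + 3) ltac:(lia) ltac:(lia)).
  destruct i as [|i].
  - rewrite !Nat.add_0_r, trend_pred_lucas_even by lia.
    replace (2 * q + 4) with (2 * (q + 1) + 2) by lia. apply trend_pred_lucas_even. lia.
  - replace (lucas (2 * q + 2) - 1 + S i) with (lucas (2 * q + 2) + i) by lia.
    replace (lucas (2 * q + 4) - 1 + S i) with (lucas (2 * (q + 1) + 2) + i)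
      by (replace (2 * (q + 1) + 2) with (2 * q + 4) by lia; lia).
    rewrite !trend_even_block; [reflexivity|lia|].
    replace (2 * (q + 1) + 1) with (2 * q + 3) by lia. lia.
Qed.

Lemma trend_copy_middle_even i : i < lucas (2 * q) ->
  trend (lucas (2 * q + 4) - 1 + lucas (2 * q + 1) + i) = trend (lucas (2 * q + 1) - 1 + i).
Proof.
  intros Hi. pose proof (lucas_pos (2 * q + 1)).
  pose proof (lucas_fib (2 * q + 1) (2 * q + 2) (2 * q + 3) ltac:(lia) ltac:(lia)).
  pose proof (lucas_lt (2 * q) (2 * q + 2) ltac:(lia) ltac:(lia)).
  replace (lucas (2 * q + 4) - 1 + lucas (2 * q + 1) + i)
    with (lucas (2 * (q + 1) + 2) + (lucas (2 * q + 1) - 1 + i))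
    by (replace (2 * (q + 1) + 2) with (2 * q + 4) by lia; pose proof (lucas_pos (2 * q + 4)); lia).
  apply trend_even_block. replace (2 * (q + 1) + 1) with (2 * q + 3) by lia. lia.
Qed.

Lemma trend_copy_tail_even i : i < lucas (2 * q + 1) ->
  trend (lucas (2 * q + 4) - 1 + lucas (2 * q + 2) + i) = trend (lucas (2 * q + 2) - 1 + i).
Proof.
  intros Hi. pose proof (lucas_pos (2 * q + 2)).
  pose proof (lucas_fib (2 * q + 1) (2 * q + 2) (2 * q + 3) ltac:(lia) ltac:(lia)).
  replace (lucas (2 * q + 4) - 1 + lucas (2 * q + 2) + i)
    with (lucas (2 * (q + 1) + 2) + (lucas (2 * q + 2) - 1 + i))
    by (replace (2 * (q + 1) + 2) with (2 * q + 4) by lia; pose proof (lucas_pos (2 * q + 4)); lia).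
  apply trend_even_block. replace (2 * (q + 1) + 1) with (2 * q + 3) by lia. lia.
Qed.

End EvenCopy.

Section OddCopy.
Variable r : nat.
Hypothesis Hr : 1 <= r.

Lemma trend_copy_head_odd i : i < lucas (2 * r + 2) ->
  trend (lucas (2 * r + 5) - 1 + i) = trend (lucas (2 * r + 3) - 1 + i).
Proof.
  intros Hi. replace (2 * r + 5) with (2 * (r + 2) + 1) by lia.
  replace (2 * r + 3) with (2 * (r + 1) + 1) by lia.
  pose proof (lucas_pos (2 * (r + 2) + 1)). pose proof (lucas_pos (2 * (r + 1) + 1)).
  destruct i as [|[|j]].
  - rewrite !Nat.add_0_r, !trend_pred_lucas_odd. reflexivity.
  - rewrite !Nat.sub_add by lia. rewrite !trend_lucas_odd by lia. reflexivity.
  - replace (2 * (r + 2) + 1) with (2 * r + 5) in * by lia.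
    replace (2 * (r + 1) + 1) with (2 * r + 3) in * by lia.
    replace (lucas (2 * r + 5) - 1 + S (S j)) with (lucas (2 * r + 5) + S j) by lia.
    replace (lucas (2 * r + 3) - 1 + S (S j)) with (lucas (2 * r + 3) + S j) by lia.
    apply (trend_shift 1); rewrite <- ?Nat.add_succ_r; apply s_beta_odd_low; lia.
Qed.

Lemma trend_copy_middle_odd i : i < lucas (2 * r + 1) ->
  trend (lucas (2 * r + 5) - 1 + lucas (2 * r + 2) + i) = trend (lucas (2 * r + 2) - 1 + i).
Proof.
  intros Hi. pose proof (lucas_pos (2 * r + 5)). pose proof (lucas_ge_3 (2 * r + 2) ltac:(lia)).
  destruct i as [|i].
  - rewrite !Nat.add_0_r, trend_pred_lucas_even by lia. apply trend_down.
    pose proof (lucas_fib (2 * r + 2) (2 * r + 3) (2 * (r + 1) + 2) ltac:(lia) ltac:(lia)).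
    pose proof (s_beta_pred_lucas_even (r + 1)).
    replace (S (lucas (2 * r + 5) - 1 + lucas (2 * r + 2)))
      with (lucas (2 * r + 5) + lucas (2 * r + 2) + 0) by lia.
    replace (lucas (2 * r + 5) - 1 + lucas (2 * r + 2))
      with (lucas (2 * r + 5) + (lucas (2 * r + 2) - 1)) by lia.
    rewrite s_beta_odd_mid, s_beta_odd_low, s_beta_0 by lia.
    replace (lucas (2 * r + 3) + (lucas (2 * r + 2) - 1)) with (lucas (2 * (r + 1) + 2) - 1) by lia. lia.
  - replace (lucas (2 * r + 5) - 1 + lucas (2 * r + 2) + S i)
      with (lucas (2 * r + 5) + lucas (2 * r + 2) + i) by lia.
    replace (lucas (2 * r + 2) - 1 + S i) with (lucas (2 * r + 2) + i) by lia.
    rewrite trend_even_block by lia.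
    apply (trend_shift 4); rewrite <- ?Nat.add_succ_r; apply s_beta_odd_mid; lia.
Qed.

Lemma trend_copy_tail_odd i : i < lucas (2 * r + 2) ->
  trend (lucas (2 * r + 5) - 1 + lucas (2 * r + 3) + i) = trend (lucas (2 * r + 3) - 1 + i).
Proof.
  intros Hi. pose proof (lucas_pos (2 * r + 5)). pose proof (lucas_pos (2 * r + 1)).
  pose proof (lucas_ge_3 (2 * r + 2) ltac:(lia)).
  pose proof (lucas_fib (2 * r + 1) (2 * r + 2) (2 * r + 3) ltac:(lia) ltac:(lia)).
  destruct i as [|[|j]].
  - rewrite !Nat.add_0_r. replace (2 * r + 3) with (2 * (r + 1) + 1) at 2 by lia.
    rewrite trend_pred_lucas_odd. apply trend_up.
    replace (lucas (2 * r + 5) - 1 + lucas (2 * r + 3))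
      with (lucas (2 * r + 5) + lucas (2 * r + 2) + (lucas (2 * r + 1) - 1)) by lia.
    replace (S (lucas (2 * r + 5) + lucas (2 * r + 2) + (lucas (2 * r + 1) - 1)))
      with (lucas (2 * r + 5) + lucas (2 * r + 2) + lucas (2 * r + 1)) by lia.
    rewrite !s_beta_odd_mid, s_beta_lucas_odd, s_beta_pred_lucas_odd by lia. lia.
  - replace (lucas (2 * r + 3) - 1 + 1) with (lucas (2 * (r + 1) + 1))
      by (replace (2 * (r + 1) + 1) with (2 * r + 3) by lia; lia).
    rewrite trend_lucas_odd by lia. apply trend_down.
    replace (lucas (2 * r + 5) - 1 + lucas (2 * r + 3) + 1)
      with (lucas (2 * r + 5) + lucas (2 * r + 2) + lucas (2 * r + 1)) by lia.
    replace (S (lucas (2 * r + 5) + lucas (2 * r + 2) + lucas (2 * r + 1)))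
      with (lucas (2 * r + 5) + lucas (2 * r + 3) + 1) by lia.
    rewrite s_beta_odd_high, s_beta_odd_mid, s_beta_lucas_odd by lia.
    replace (lucas (2 * r + 3) + 1) with (lucas (2 * (r + 1) + 1) + 1)
      by (replace (2 * (r + 1) + 1) with (2 * r + 3) by lia; lia).
    rewrite s_beta_succ_lucas_odd; lia.
  - replace (lucas (2 * r + 5) - 1 + lucas (2 * r + 3) + S (S j))
      with (lucas (2 * r + 5) + lucas (2 * r + 3) + S j) by lia.
    replace (lucas (2 * r + 3) - 1 + S (S j)) with (lucas (2 * r + 3) + S j) by lia.
    apply (trend_shift 1); rewrite <- ?Nat.add_succ_r; apply s_beta_odd_high; lia.
Qed.

End OddCopy.

Lemma lucas_eq a b : a = b -> lucas a = lucas b.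
Proof. intros ->. reflexivity. Qed.

Lemma trend_copy_head k i : i < lucas (k + 4) ->
  trend (lucas (k + 7) - 1 + i) = trend (lucas (k + 5) - 1 + i).
Proof.
  intros Hi. destruct (Nat.Even_or_Odd k) as [[q ->]|[q ->]].
  - rewrite (lucas_eq (2 * q + 7) (2 * (q + 1) + 5)), (lucas_eq (2 * q + 5) (2 * (q + 1) + 3)) by lia.
    apply trend_copy_head_odd; [lia|]. rewrite <- (lucas_eq (2 * q + 4)) by lia. exact Hi.
  - rewrite (lucas_eq (2 * q + 1 + 7) (2 * (q + 2) + 4)), (lucas_eq (2 * q + 1 + 5) (2 * (q + 2) + 2)) by lia.
    apply trend_copy_head_even; [lia|]. rewrite <- (lucas_eq (2 * q + 1 + 4)) by lia. exact Hi.
Qed.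

Lemma trend_copy_middle k i : i < lucas (k + 3) ->
  trend (lucas (k + 7) - 1 + lucas (k + 4) + i) = trend (lucas (k + 4) - 1 + i).
Proof.
  intros Hi. destruct (Nat.Even_or_Odd k) as [[q ->]|[q ->]].
  - rewrite (lucas_eq (2 * q + 7) (2 * (q + 1) + 5)), (lucas_eq (2 * q + 4) (2 * (q + 1) + 2)) by lia.
    apply trend_copy_middle_odd; [lia|]. rewrite <- (lucas_eq (2 * q + 3)) by lia. exact Hi.
  - rewrite (lucas_eq (2 * q + 1 + 7) (2 * (q + 2) + 4)), (lucas_eq (2 * q + 1 + 4) (2 * (q + 2) + 1)) by lia.
    apply trend_copy_middle_even; [lia|]. rewrite <- (lucas_eq (2 * q + 1 + 3)) by lia. exact Hi.
Qed.

Lemma trend_copy_tail k i : i < lucas (k + 4) ->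
  trend (lucas (k + 7) - 1 + lucas (k + 5) + i) = trend (lucas (k + 5) - 1 + i).
Proof.
  intros Hi. destruct (Nat.Even_or_Odd k) as [[q ->]|[q ->]].
  - rewrite (lucas_eq (2 * q + 7) (2 * (q + 1) + 5)), (lucas_eq (2 * q + 5) (2 * (q + 1) + 3)) by lia.
    apply trend_copy_tail_odd; [lia|]. rewrite <- (lucas_eq (2 * q + 4)) by lia. exact Hi.
  - rewrite (lucas_eq (2 * q + 1 + 7) (2 * (q + 2) + 4)), (lucas_eq (2 * q + 1 + 5) (2 * (q + 2) + 2)) by lia.
    apply trend_copy_tail_even; [lia|]. rewrite <- (lucas_eq (2 * q + 1 + 4)) by lia. exact Hi.
Qed.

Lemma morph_apply_app {A} (mu : A -> list A) u w :
  morph_apply mu (u ++ w) = morph_apply mu u ++ morph_apply mu w.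
Proof. apply flat_map_app. Qed.

Lemma morph_iter_app {A} (mu : A -> list A) n u w :
  morph_iter mu n (u ++ w) = morph_iter mu n u ++ morph_iter mu n w.
Proof. induction n as [|n IH]; simpl; auto. rewrite IH, morph_apply_app. auto. Qed.

Lemma morph_iter_S {A} (mu : A -> list A) n w :
  morph_iter mu (S n) w = morph_iter mu n (morph_apply mu w).
Proof. induction n as [|n IH]; simpl; auto. simpl in IH. rewrite IH. auto. Qed.

Inductive block := Ba | Bb | Bc.

Definition block_subst (x : block) : list block :=
  match x with Ba => [Bb] | Bb => [Bc] | Bc => [Bb; Ba; Bb] end.

Definition block_word (n : nat) : list block := morph_iter block_subst n [Ba].

Definition block_trends (x : block) : list comparison :=
  match x with
  | Ba => [Lt; Gt; Gt; Eq]
  | Bb => [Gt; Lt; Eq; Eq; Gt; Lt; Eq]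
  | Bc => [Lt; Gt; Gt; Eq; Gt; Eq; Eq; Lt; Gt; Gt; Eq]
  end.

Definition trend_word (n : nat) : list comparison := flat_map block_trends (block_word n).

Lemma block_word_rec n : block_word (n + 3) = block_word (n + 1) ++ block_word n ++ block_word (n + 1).
Proof.
  induction n as [|n IH]; [reflexivity|].
  unfold block_word in *. replace (S n + 3) with (S (n + 3)) by lia.
  replace (S n + 1) with (S (n + 1)) by lia. cbn [morph_iter]. rewrite IH, !morph_apply_app. reflexivity.
Qed.

Lemma trend_word_rec n : trend_word (n + 3) = trend_word (n + 1) ++ trend_word n ++ trend_word (n + 1).
Proof. unfold trend_word. rewrite block_word_rec, !flat_map_app. reflexivity. Qed.

Lemma length_trend_word n : length (trend_word n) = lucas (n + 3).
Proof.
  induction n as [n IH] using (well_founded_induction lt_wf).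
  destruct n as [|[|[|n]]]; try reflexivity.
  replace (S (S (S n))) with (n + 3) by lia. rewrite trend_word_rec, !length_app, !IH by lia.
  rewrite (lucas_fib (n + 4) (n + 5) (n + 3 + 3)), (lucas_fib (n + 3) (n + 4) (n + 5)) by lia.
  replace (n + 1 + 3) with (n + 4) by lia. lia.
Qed.

Lemma trend_on_block n i : i < lucas (n + 3) -> trend (lucas (n + 4) - 1 + i) = nth i (trend_word n) Eq.
Proof.
  revert i. induction n as [n IH] using (well_founded_induction lt_wf). intros i Hi.
  destruct n as [|[|[|k]]];
    [simpl in *; rewrite trend_upto_27 by lia; do 11 (destruct i as [|i]; [reflexivity || lia|]); lia ..|].
  replace (S (S (S k))) with (k + 3) in * by lia. rewrite trend_word_rec.
  replace (k + 3 + 4) with (k + 7) by lia. replace (k + 3 + 3) with (k + 6) in Hi by lia.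
  pose proof (lucas_fib (k + 4) (k + 5) (k + 6) ltac:(lia) ltac:(lia)).
  pose proof (lucas_fib (k + 3) (k + 4) (k + 5) ltac:(lia) ltac:(lia)).
  pose proof (length_trend_word (k + 1)) as W1. pose proof (length_trend_word k) as W0.
  replace (k + 1 + 3) with (k + 4) in W1 by lia.
  destruct (Nat.lt_ge_cases i (lucas (k + 4))) as [H1|H1].
  - rewrite app_nth1, trend_copy_head by lia.
    replace (k + 5) with (k + 1 + 4) by lia. apply IH; [lia|]. now replace (k + 1 + 3) with (k + 4) by lia.
  - rewrite app_nth2 by lia. rewrite W1.
    destruct (Nat.lt_ge_cases (i - lucas (k + 4)) (lucas (k + 3))) as [H2|H2].
    + rewrite app_nth1 by lia.
      replace (lucas (k + 7) - 1 + i) with (lucas (k + 7) - 1 + lucas (k + 4) + (i - lucas (k + 4))) by lia.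
      rewrite trend_copy_middle by lia. apply IH; lia.
    + rewrite app_nth2 by lia. rewrite W0.
      replace (lucas (k + 7) - 1 + i)
        with (lucas (k + 7) - 1 + lucas (k + 5) + (i - lucas (k + 4) - lucas (k + 3))) by lia.
      rewrite trend_copy_tail by lia. replace (k + 5) with (k + 1 + 4) by lia.
      apply IH; [lia|]. replace (k + 1 + 3) with (k + 4) by lia. lia.
Qed.

Fixpoint block_prefix (n : nat) : list block :=
  match n with O => [] | S m => block_prefix m ++ block_word m end.

Definition initial_trends : list comparison := [Gt; Gt; Eq; Gt; Eq; Eq].

Definition trend_prefix (n : nat) : list comparison :=
  initial_trends ++ flat_map block_trends (block_prefix n).

Lemma length_trend_prefix n : length (trend_prefix n) = lucas (n + 4) - 1.
Proof.
  induction n as [|n IH]; [reflexivity|].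
  unfold trend_prefix in *. cbn [block_prefix]. rewrite flat_map_app, app_assoc, length_app, IH.
  fold (trend_word n). rewrite length_trend_word.
  rewrite (lucas_fib (n + 3) (n + 4) (S n + 4)) by lia. pose proof (lucas_pos (n + 4)). lia.
Qed.

Lemma trend_prefix_spec n i : i < length (trend_prefix n) -> trend i = nth i (trend_prefix n) Eq.
Proof.
  induction n as [|n IH]; intros Hi.
  - simpl in Hi. rewrite trend_upto_27 by lia. do 6 (destruct i as [|i]; [reflexivity|]). lia.
  - assert (E : trend_prefix (S n) = trend_prefix n ++ trend_word n).
    { unfold trend_prefix. cbn [block_prefix]. rewrite flat_map_app, app_assoc. reflexivity. }
    rewrite E in *. rewrite length_app, length_trend_word, length_trend_prefix in Hi.
    destruct (Nat.lt_ge_cases i (length (trend_prefix n))) as [H|H].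
    + rewrite app_nth1 by auto. auto.
    + rewrite app_nth2 by auto. rewrite length_trend_prefix in *. pose proof (lucas_pos (n + 4)).
      replace i with (lucas (n + 4) - 1 + (i - (lucas (n + 4) - 1))) at 1 by lia.
      apply trend_on_block. lia.
Qed.

(** * Gaps between consecutive points *)

(* [fst (gaps w)] counts the leading [false]s of [w]; [snd (gaps w)] lists, for each [true]
   of [w], its distance to the next [true] (or to the end of [w], plus one). *)
Fixpoint gaps (w : list bool) : nat * list nat :=
  match w with
  | [] => (0, [])
  | c :: t => let r := gaps t in if c then (0, S (fst r) :: snd r) else (S (fst r), snd r)
  end.

Lemma gaps_app w1 w2 : fst (gaps w2) = 0 -> gaps (w1 ++ w2) = (fst (gaps w1), snd (gaps w1) ++ snd (gaps w2)).
Proof.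
  intros H. induction w1 as [|c t IH]; simpl.
  - destruct (gaps w2); simpl in *; subst; auto.
  - rewrite IH. destruct c; auto.
Qed.

Section Enumeration.
Variable P : nat -> bool.

Lemma count_below_mono a b : a <= b -> count_below P a <= count_below P b.
Proof.
  induction 1 as [|b _ IH]; auto. simpl. lia.
Qed.

Lemma enum1_count_below N : P N = true -> enum1 P (S (count_below P N)) = N.
Proof.
  intros HP. unfold enum1.
  assert (Ex : exists N', P N' = true /\ count_below P N' = S (count_below P N) - 1)
    by (exists N; split; auto; lia).
  destruct (epsilon_spec (inhabits 0) _ Ex) as [HP' Hc'].
  set (e := epsilon _ _) in *.
  destruct (lt_eq_lt_dec e N) as [[H|H]|H]; auto; exfalso.
  - pose proof (count_below_mono (S e) N H). simpl in H0. rewrite HP' in H0. lia.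
  - pose proof (count_below_mono (S N) e H). simpl in H0. rewrite HP in H0. lia.
Qed.

Lemma count_below_skip a d : P a = true -> (forall i, a < i <= a + d -> P i = false) ->
  count_below P (a + S d) = count_below P a + 1.
Proof.
  intros Ha Hf. induction d as [|d IH].
  - rewrite Nat.add_1_r. simpl. rewrite Ha. auto.
  - replace (a + S (S d)) with (S (a + S d)) by lia. simpl.
    rewrite IH, Hf; [lia | lia | intros i Hi; apply Hf; lia].
Qed.

Lemma gaps_leading_run m a : P (a + m) = true ->
  let d := fst (gaps (map P (seq a m))) in
  d <= m /\ (forall i, a <= i < a + d -> P i = false) /\ P (a + d) = true /\
  snd (gaps (map P (seq a m))) = snd (gaps (map P (seq (a + d) (m - d)))).
Proof.
  revert a. induction m as [|m IH]; intros a Ha.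
  - simpl. rewrite Nat.add_0_r in *. repeat split; auto; lia.
  - cbn [seq map gaps]. destruct (P a) eqn:Pa.
    + simpl. rewrite Nat.add_0_r, Pa. repeat split; auto; lia.
    + rewrite <- Nat.add_succ_comm in Ha.
      destruct (IH (S a) Ha) as (I1 & I2 & I3 & I4). cbn [fst snd].
      rewrite <- Nat.add_succ_comm. repeat split; auto; try lia.
      intros i Hi. destruct (Nat.eq_dec i a) as [->|]; auto. apply I2. lia.
Qed.

Theorem enum1_gaps len st : P st = true -> P (st + len) = true -> 0 < len ->
  forall k, k < length (snd (gaps (map P (seq st len)))) ->
  enum1 P (count_below P st + k + 2) =
  enum1 P (count_below P st + k + 1) + nth k (snd (gaps (map P (seq st len)))) 0.
Proof.
  revert st. induction len as [len IH] using (well_founded_induction lt_wf).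
  intros st Hst Hend Hlen k Hk. destruct len as [|m]; [lia|].
  cbn [seq map gaps] in *. rewrite Hst in *.
  rewrite <- Nat.add_succ_comm in Hend.
  destruct (gaps_leading_run m (S st) Hend) as (G1 & G2 & G3 & G4).
  set (d := fst (gaps (map P (seq (S st) m)))) in *.
  assert (Hc : count_below P (S st + d) = count_below P st + 1).
  { replace (S st + d) with (st + S d) by lia. apply count_below_skip; auto. intros i Hi. apply G2. lia. }
  assert (E0 : enum1 P (count_below P st + 1) = st)
    by (rewrite Nat.add_1_r; apply enum1_count_below; auto).
  assert (E1 : enum1 P (count_below P st + 2) = S st + d)
    by (replace (count_below P st + 2) with (S (count_below P (S st + d))) by lia;
        apply enum1_count_below; auto).
  cbn [snd length nth] in *. destruct k as [|k].
  - rewrite !Nat.add_0_r, E0, E1. lia.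
  - rewrite G4 in Hk |- *.
    destruct (Nat.eq_dec (m - d) 0) as [E|E]; [rewrite E in Hk; simpl in Hk; lia|].
    assert (Hend' : P (S st + d + (m - d)) = true) by (replace (S st + d + (m - d)) with (S st + m) by lia; auto).
    pose proof (IH (m - d) ltac:(lia) (S st + d) G3 Hend' ltac:(lia) k ltac:(lia)) as IH'.
    rewrite Hc in IH'.
    replace (count_below P st + S k) with (count_below P st + 1 + k) by lia. exact IH'.
Qed.

End Enumeration.

(** * Cutting the sign word at one sign *)

Definition comparison_eqb (a b : comparison) : bool :=
  match a, b with Eq, Eq | Lt, Lt | Gt, Gt => true | _, _ => false end.

Fixpoint split_first (x : comparison) (w : list comparison) : list comparison * list comparison :=
  match w with
  | [] => ([], [])
  | c :: t => if comparison_eqb c x then ([], w) else let r := split_first x t in (c :: fst r, snd r)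
  end.

Lemma split_first_app x w : fst (split_first x w) ++ snd (split_first x w) = w.
Proof.
  induction w as [|c t IH]; simpl; auto. destruct (comparison_eqb c x); simpl; auto. rewrite IH. auto.
Qed.

Definition head_part x p := fst (split_first x (block_trends p)).
Definition tail_part x p := snd (split_first x (block_trends p)).
Definition segment x p q := tail_part x p ++ head_part x q.

Fixpoint adjacent_pairs (w : list block) (q : block) : list (block * block) :=
  match w with [] => [] | p :: t => (p, hd q t) :: adjacent_pairs t q end.

Definition subst_head (y : block) : block := hd Ba (block_subst y).

Definition subst_pair (pq : block * block) : list (block * block) :=
  adjacent_pairs (block_subst (fst pq)) (subst_head (snd pq)).

Lemma adjacent_pairs_app w1 w2 q :
  adjacent_pairs (w1 ++ w2) q = adjacent_pairs w1 (hd q w2) ++ adjacent_pairs w2 q.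
Proof. induction w1 as [|p [|p' t] IH]; simpl in *; auto; rewrite IH; auto. Qed.

Lemma block_subst_cons y : exists z r, block_subst y = z :: r.
Proof. destruct y; simpl; eauto. Qed.

Lemma hd_morph_apply q w :
  hd (subst_head q) (morph_apply block_subst w) = subst_head (hd q w).
Proof.
  destruct w as [|y t]; auto. unfold morph_apply, subst_head. simpl.
  destruct (block_subst_cons y) as (z & r & ->). reflexivity.
Qed.

Lemma adjacent_pairs_morph_apply w q :
  adjacent_pairs (morph_apply block_subst w) (subst_head q) = flat_map subst_pair (adjacent_pairs w q).
Proof.
  induction w as [|p t IH]; auto.
  change (morph_apply block_subst (p :: t)) with (block_subst p ++ morph_apply block_subst t).
  rewrite adjacent_pairs_app, hd_morph_apply, IH. reflexivity.
Qed.

(* Cutting every block code at its first [x] regroups the trend word into segments, each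
   determined by a pair of adjacent blocks. *)
Lemma block_trends_as_segments x w q :
  flat_map block_trends w ++ head_part x q =
  head_part x (hd q w) ++ flat_map (fun pq => segment x (fst pq) (snd pq)) (adjacent_pairs w q).
Proof.
  induction w as [|p t IH]; simpl; auto using app_nil_r.
  rewrite <- app_assoc, IH, <- (split_first_app x (block_trends p)) at 1.
  unfold segment, head_part, tail_part. rewrite <- !app_assoc. reflexivity.
Qed.

Definition next_block (n : nat) : block := hd Ba (block_word n).

Lemma block_word_cons n : exists z r, block_word n = z :: r.
Proof.
  induction n as [|n [z [r E]]]; [exists Ba, []; reflexivity|].
  change (block_word (S n)) with (morph_apply block_subst (block_word n)). rewrite E.
  unfold morph_apply. simpl. destruct (block_subst_cons z) as (z' & r' & ->). simpl. eauto.
Qed.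

Lemma next_block_S n : next_block (S n) = subst_head (next_block n).
Proof.
  unfold next_block. change (block_word (S n)) with (morph_apply block_subst (block_word n)).
  destruct (block_word_cons n) as (z & r & ->). unfold subst_head, morph_apply. simpl.
  destruct (block_subst_cons z) as (z' & r' & ->). reflexivity.
Qed.

Lemma block_prefix_S n : block_prefix (S n) = Ba :: morph_apply block_subst (block_prefix n).
Proof.
  induction n as [|n IH]; auto.
  change (block_prefix (S (S n))) with (block_prefix (S n) ++ block_word (S n)).
  rewrite IH at 1. cbn [block_prefix]. rewrite morph_apply_app. reflexivity.
Qed.

Lemma hd_block_prefix n : hd (next_block n) (block_prefix n) = Ba.
Proof. destruct n; auto. rewrite block_prefix_S. reflexivity. Qed.

Definition block_pairs (n : nat) := adjacent_pairs (block_prefix n) (next_block n).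

Lemma block_pairs_S n : block_pairs (S n) = (Ba, Bb) :: flat_map subst_pair (block_pairs n).
Proof.
  unfold block_pairs. rewrite block_prefix_S, next_block_S. simpl.
  rewrite hd_morph_apply, hd_block_prefix, adjacent_pairs_morph_apply. reflexivity.
Qed.

Section FixedPoint.
Context {A : Type} (mu : A -> list A) (a b : A) (r : list A).
Hypothesis mu_nonerasing : forall y, mu y <> [].
Hypothesis mu_a : mu a = a :: b :: r.

Lemma length_morph_iter_ge n w : length w <= length (morph_iter mu n w).
Proof.
  revert w. induction n as [|n IH]; intros w; simpl; auto.
  enough (forall u, length u <= length (morph_apply mu u)) by (specialize (IH w); eauto using Nat.le_trans).
  induction u as [|y u IHu]; simpl; auto. unfold morph_apply in *. simpl. rewrite length_app.
  destruct (mu y) eqn:E; [contradiction (mu_nonerasing y)|]. simpl. lia.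
Qed.

Lemma length_morph_iter_fixed n : n < length (morph_iter mu n [a]).
Proof.
  induction n as [|n IH]; simpl; auto.
  change (morph_apply mu (morph_iter mu n [a])) with (morph_iter mu (S n) [a]).
  rewrite morph_iter_S. unfold morph_apply. simpl. rewrite mu_a, app_nil_r.
  change (a :: b :: r) with ([a] ++ b :: r). rewrite morph_iter_app, length_app.
  pose proof (length_morph_iter_ge n (b :: r)). simpl in *. lia.
Qed.

Lemma fixpt_nth j w u :
  j < length (morph_iter mu (S j) (a :: w) ++ u) /\
  nth j (morph_iter mu (S j) (a :: w) ++ u) a = fixpt mu a j.
Proof.
  unfold fixpt. change (a :: w) with ([a] ++ w). rewrite morph_iter_app, <- app_assoc.
  pose proof (length_morph_iter_fixed (S j)). rewrite length_app, app_nth1 by lia. split; [lia|auto].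
Qed.

End FixedPoint.

Lemma map_nth_seq {A} (w : list A) d a :
  map (fun i => nth i w d) (seq a (length w - a)) = skipn a w.
Proof.
  revert a. induction w as [|c w IH]; intros a; [destruct a; auto|].
  destruct a as [|a]; simpl; rewrite <- seq_shift, map_map; simpl.
  - f_equal. specialize (IH 0). rewrite Nat.sub_0_r in IH. exact IH.
  - apply IH.
Qed.

(* [seg_letters p q] codes the gaps inside the segment from the first [x] of a block [p] to
   the first [x] of the next block [q]; [conjugacy] says that two steps of the block
   substitution act on these codes as [mu], up to the boundary words [carry]. *)
Section GapConjugacy.
Variable x : comparison.
Variable A : Type.
Variables (mu : A -> list A) (proj : A -> nat).
Variable seg_letters : block -> block -> list A.
Variable carry : block -> list A.
Variable v : list A.
Variable admissible : block -> block -> bool.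
Variables st dk : nat.

Let is_x (c : comparison) : bool := comparison_eqb c x.

Definition pair_letters (ps : list (block * block)) : list A :=
  flat_map (fun pq => seg_letters (fst pq) (snd pq)) ps.

Hypothesis admissible_start : admissible Ba Bb = true.
Hypothesis admissible_subst : forall p q, admissible p q = true ->
  forall y, In y (subst_pair (p, q)) -> admissible (fst y) (snd y) = true.
Hypothesis conjugacy : forall p q, admissible p q = true ->
  carry p ++ pair_letters (flat_map subst_pair (subst_pair (p, q))) =
  morph_apply mu (seg_letters p q) ++ carry q.
Hypothesis conjugacy_start :
  v ++ seg_letters Ba Bb ++ pair_letters (subst_pair (Ba, Bb)) = morph_apply mu v ++ carry Ba.
Hypothesis segment_gaps : forall p q, admissible p q = true ->
  gaps (map is_x (segment x p q)) = (0, map proj (seg_letters p q)).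
Hypothesis initial_gaps :
  gaps (map is_x (skipn st (initial_trends ++ head_part x Ba))) = (0, map proj (skipn dk v)).
Hypothesis tail_part_starts : forall p, exists t, tail_part x p = x :: t.
Hypothesis st_le : st <= length (initial_trends ++ head_part x Ba).
Hypothesis dk_le : dk <= length v.
Hypothesis trend_st : trend st = x.

Lemma pair_letters_app ps1 ps2 : pair_letters (ps1 ++ ps2) = pair_letters ps1 ++ pair_letters ps2.
Proof. apply flat_map_app. Qed.

Lemma block_pairs_admissible n y : In y (block_pairs n) -> admissible (fst y) (snd y) = true.
Proof.
  revert y. induction n as [|n IH]; intros y Hy; [destruct Hy|].
  rewrite block_pairs_S in Hy. destruct Hy as [<-|Hy]; auto.
  apply in_flat_map in Hy. destruct Hy as [[p q] [Hpq Hy]]. exact (admissible_subst p q (IH _ Hpq) y Hy).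
Qed.

Lemma pair_letters_telescope w q :
  (forall y, In y (adjacent_pairs w q) -> admissible (fst y) (snd y) = true) ->
  carry (hd q w) ++ pair_letters (flat_map subst_pair (flat_map subst_pair (adjacent_pairs w q))) =
  morph_apply mu (pair_letters (adjacent_pairs w q)) ++ carry q.
Proof.
  induction w as [|p t IH]; intros Hadm; [simpl; apply app_nil_r|].
  cbn [adjacent_pairs flat_map hd]. rewrite flat_map_app, pair_letters_app, app_assoc.
  rewrite conjugacy by (apply (Hadm (p, hd q t)); left; auto).
  rewrite <- app_assoc, IH by (intros y Hy; apply Hadm; right; auto).
  cbn [pair_letters flat_map fst snd]. rewrite morph_apply_app, app_assoc. reflexivity.
Qed.

Definition letters (n : nat) : list A := v ++ pair_letters (block_pairs n).

Lemma letters_SS n : letters (S (S n)) = morph_apply mu (letters n) ++ carry (next_block n).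
Proof.
  unfold letters. rewrite !block_pairs_S.
  change (flat_map subst_pair ((Ba, Bb) :: flat_map subst_pair (block_pairs n)))
    with (subst_pair (Ba, Bb) ++ flat_map subst_pair (flat_map subst_pair (block_pairs n))).
  set (rest := flat_map subst_pair (flat_map subst_pair (block_pairs n))).
  change (pair_letters ((Ba, Bb) :: subst_pair (Ba, Bb) ++ rest))
    with (seg_letters Ba Bb ++ pair_letters (subst_pair (Ba, Bb) ++ rest)).
  rewrite pair_letters_app, !app_assoc, <- (app_assoc v), conjugacy_start, <- app_assoc.
  rewrite <- (hd_block_prefix n) at 1. unfold block_pairs.
  rewrite pair_letters_telescope by apply block_pairs_admissible.
  rewrite morph_apply_app, app_assoc. reflexivity.
Qed.

Lemma letters_prefix m : exists r, letters (2 * m) = morph_iter mu m v ++ r.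
Proof.
  induction m as [|m [r E]]; [exists (pair_letters (block_pairs 0)); reflexivity|].
  replace (2 * S m) with (S (S (2 * m))) by lia. rewrite letters_SS, E, morph_apply_app, <- app_assoc.
  eexists. reflexivity.
Qed.

Definition cut_trends (n : nat) : list comparison := trend_prefix n ++ head_part x (next_block n).

Lemma segments_gaps ps : (forall y, In y ps -> admissible (fst y) (snd y) = true) ->
  gaps (map is_x (flat_map (fun pq => segment x (fst pq) (snd pq)) ps)) = (0, map proj (pair_letters ps)).
Proof.
  induction ps as [|[p q] ps IH]; intros Hadm; auto.
  cbn [flat_map]. rewrite map_app, gaps_app.
  - rewrite segment_gaps, IH by (intros; apply Hadm; simpl; auto).
    cbn [pair_letters flat_map fst snd]. rewrite map_app. reflexivity.
  - rewrite IH by (intros; apply Hadm; right; auto). reflexivity.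
Qed.

Lemma cut_trends_as_segments n : cut_trends n =
  (initial_trends ++ head_part x Ba) ++ flat_map (fun pq => segment x (fst pq) (snd pq)) (block_pairs n).
Proof.
  unfold cut_trends, trend_prefix. rewrite <- app_assoc, block_trends_as_segments, hd_block_prefix.
  rewrite app_assoc. reflexivity.
Qed.

Lemma cut_trends_gaps n : gaps (map is_x (skipn st (cut_trends n))) = (0, map proj (skipn dk (letters n))).
Proof.
  rewrite cut_trends_as_segments, (skipn_app st (initial_trends ++ _)).
  replace (st - length _) with 0 by lia.
  unfold letters. rewrite (skipn_app dk v). replace (dk - length v) with 0 by lia. cbn [skipn].
  pose proof (segments_gaps (block_pairs n) (block_pairs_admissible n)) as G.
  rewrite map_app, gaps_app, initial_gaps, G, map_app; [reflexivity|]. rewrite G. reflexivity.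
Qed.

Lemma cut_trends_spec n :
  (forall i, i < length (cut_trends n) -> trend i = nth i (cut_trends n) Eq) /\
  trend (length (cut_trends n)) = x.
Proof.
  assert (E : exists t, trend_prefix (S n) = cut_trends n ++ x :: t).
  { unfold cut_trends, next_block, trend_prefix. cbn [block_prefix].
    destruct (block_word_cons n) as (z & r & ->). cbn [hd].
    rewrite flat_map_app. cbn [flat_map]. rewrite <- (split_first_app x (block_trends z)).
    fold (head_part x z) (tail_part x z). destruct (tail_part_starts z) as [t ->].
    exists (t ++ flat_map block_trends r). rewrite <- !app_assoc. reflexivity. }
  destruct E as [t E]. pose proof (trend_prefix_spec (S n)) as T. rewrite E in T.
  split.
  - intros i Hi. rewrite T by (rewrite length_app; cbn [length]; lia). apply app_nth1, Hi.
  - rewrite T by (rewrite length_app; cbn [length]; lia). rewrite app_nth2, Nat.sub_diag by lia. reflexivity.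
Qed.

Lemma comparison_eqb_refl c : comparison_eqb c c = true.
Proof. destruct c; reflexivity. Qed.

Theorem enum1_by_fixpt (P : nat -> bool) (a : A) (b : A) (w r : list A) :
  (forall N, P N = comparison_eqb (trend N) x) -> count_below P st = 0 ->
  v = a :: w -> mu a = a :: b :: r -> (forall y, mu y <> []) ->
  enum1 P 1 = st /\ forall k, enum1 P (k + 2) = enum1 P (k + 1) + proj (fixpt mu a (k + dk)).
Proof.
  intros HP Hc Hv Hmu Hne.
  assert (Pst : P st = true) by (rewrite HP, trend_st; apply comparison_eqb_refl).
  split; [rewrite <- Hc; apply enum1_count_below, Pst|]. intros k.
  set (n := 2 * S (k + dk)).
  destruct (letters_prefix (S (k + dk))) as [u Eu]. fold n in Eu. rewrite Hv in Eu.
  destruct (fixpt_nth mu a b r Hne Hmu (k + dk) w u) as [Hlen Hfix]. rewrite <- Eu in Hlen, Hfix.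
  destruct (cut_trends_spec n) as [T1 T2].
  assert (Hst : st <= length (cut_trends n))
    by (rewrite cut_trends_as_segments, length_app; lia).
  set (len := length (cut_trends n) - st).
  assert (Hseq : map P (seq st len) = map is_x (skipn st (cut_trends n))).
  { rewrite <- (map_nth_seq (cut_trends n) Eq st), map_map. apply map_ext_in.
    intros i Hi. apply in_seq in Hi. rewrite HP, T1 by lia. reflexivity. }
  pose proof (cut_trends_gaps n) as G. rewrite <- Hseq in G.
  assert (Hk : k < length (snd (gaps (map P (seq st len)))))
    by (rewrite G; cbn [snd]; rewrite length_map, length_skipn; lia).
  assert (Hend : P (st + len) = true)
    by (rewrite HP; replace (st + len) with (length (cut_trends n)) by lia;
        rewrite T2; apply comparison_eqb_refl).
  pose proof (enum1_gaps P len st Pst Hend ltac:(destruct len; [simpl in Hk; lia|lia]) k Hk) as E.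
  rewrite Hc in E. cbn [Nat.add] in E. rewrite E. f_equal.
  rewrite G. cbn [snd]. rewrite (nth_indep _ 0 (proj a)) by (rewrite length_map, length_skipn; lia).
  rewrite map_nth, nth_skipn, <- Hfix, Nat.add_comm. reflexivity.
Qed.

End GapConjugacy.

(** * The three morphisms *)

(* The pairs of adjacent letters that occur in the block words. *)
Definition admissible_pair (p q : block) : bool :=
  match p, q with Ba, Bb | Bb, Ba | Bb, Bc | Bc, Bb => true | _, _ => false end.

Lemma admissible_pair_subst p q : admissible_pair p q = true ->
  forall y, In y (subst_pair (p, q)) -> admissible_pair (fst y) (snd y) = true.
Proof.
  destruct p, q; intros H y Hy; try discriminate; vm_compute in Hy;
    repeat (destruct Hy as [<-|Hy]; [reflexivity|]); contradiction.
Qed.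

Lemma incp_trend N : incp N = comparison_eqb (trend N) Gt.
Proof.
  unfold incp, trend. destruct (Nat.compare_spec (s_beta (S N)) (s_beta N)); simpl;
    apply Nat.ltb_lt || apply Nat.ltb_ge; lia.
Qed.

Lemma conp_trend N : conp N = comparison_eqb (trend N) Eq.
Proof.
  unfold conp, trend. destruct (Nat.compare_spec (s_beta (S N)) (s_beta N)); simpl;
    apply Nat.eqb_eq || apply Nat.eqb_neq; lia.
Qed.

Lemma decp_trend N : decp N = comparison_eqb (trend N) Lt.
Proof.
  unfold decp, trend. destruct (Nat.compare_spec (s_beta (S N)) (s_beta N)); simpl;
    apply Nat.ltb_lt || apply Nat.ltb_ge; lia.
Qed.

Lemma DeltaW_of_steps V f : (forall k, V (k + 2) = V (k + 1) + f k) ->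
  forall k, DeltaW V k = Z.of_nat (f k).
Proof.
  intros H k. unfold DeltaW. rewrite <- (Nat.add_1_r k), <- (Nat.add_1_r (k + 1)), <- Nat.add_assoc, H.
  lia.
Qed.

(* Discharges the finite checks required by [enum1_by_fixpt]: conjugacy and gaps on the
   admissible pairs, the initial segment, and non-erasure of the morphism. *)
Local Ltac by_computation :=
  first
  [ reflexivity
  | intros [] [] H; try discriminate H; vm_compute; reflexivity
  | intros []; eexists; vm_compute; reflexivity
  | vm_compute; lia
  | rewrite trend_upto_27 by lia; reflexivity
  | intros y; do 8 (destruct y as [|y]; [discriminate|]); discriminate
  | intros []; discriminate ].

Definition seg_I (p q : block) : list nat :=
  match p, q with
  | Ba, Bb => [1; 2] | Bb, Ba | Bb, Bc => [4; 4] | Bc, Bb => [1; 2; 4; 1; 2] | _, _ => []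
  end.

Definition carry_I (p : block) : list nat := match p with Bb => [1; 2] | _ => [] end.

Lemma increase_points : I_beta 1 = 0 /\ forall k, DeltaW I_beta k = Z.of_nat (fixpt mu_I 1 k).
Proof.
  unshelve epose proof (enum1_by_fixpt Gt nat mu_I (fun n => n) seg_I carry_I [1; 2; 4] admissible_pair
    0 0 eq_refl admissible_pair_subst _ _ _ _ _ _ _ _ incp 1 2 [2; 4] [] incp_trend eq_refl eq_refl eq_refl _)
    as [H1 H2]; [by_computation ..|].
  split; [exact H1|]. apply DeltaW_of_steps. intros k. rewrite H2, Nat.add_0_r. reflexivity.
Qed.

Definition seg_C (p q : block) : list letC :=
  match p, q with
  | Ba, Bb => [C3] | Bb, Ba | Bb, Bc => [Defs.C1; C3'; C4] | Bc, Bb => [C2; Defs.C1; C4; C3] | _, _ => []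
  end.

Definition carry_C (p : block) : list letC := match p with Bb => [C4; C3] | _ => [] end.

Lemma constancy_points :
  C_beta 1 = 2 /\ forall k, DeltaW C_beta k = Z.of_nat (proj_C (fixpt mu_C C2 k)).
Proof.
  assert (Hc : count_below conp 2 = 0)
    by (cbn [count_below]; rewrite !conp_trend, !trend_upto_27 by lia; reflexivity).
  unshelve epose proof (enum1_by_fixpt Eq letC mu_C proj_C seg_C carry_C [C2; Defs.C1; C4] admissible_pair
    2 0 eq_refl admissible_pair_subst _ _ _ _ _ _ _ _
    conp C2 Defs.C1 [Defs.C1; C4] [] conp_trend Hc eq_refl eq_refl _)
    as [H1 H2]; [by_computation ..|].
  split; [exact H1|]. apply DeltaW_of_steps. intros k. rewrite H2, Nat.add_0_r. reflexivity.
Qed.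

Definition seg_D (p q : block) : list nat :=
  match p, q with
  | Ba, Bb => [5] | Bb, Ba | Bb, Bc => [4; 2] | Bc, Bb => [7; 5] | _, _ => []
  end.

Definition carry_D (p : block) : list nat := match p with Bb => [5] | _ => [] end.

Lemma decrease_points : D_beta 1 = 6 /\ forall k, DeltaW D_beta k = Z.of_nat (fixpt mu_D 7 (S k)).
Proof.
  assert (Hc : count_below decp 6 = 0)
    by (cbn [count_below]; rewrite !decp_trend, !trend_upto_27 by lia; reflexivity).
  unshelve epose proof (enum1_by_fixpt Lt nat mu_D (fun n => n) seg_D carry_D [7] admissible_pair
    6 1 eq_refl admissible_pair_subst _ _ _ _ _ _ _ _ decp 7 5 [] [4; 2] decp_trend Hc eq_refl eq_refl _)
    as [H1 H2]; [by_computation ..|].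
  split; [exact H1|]. apply DeltaW_of_steps. intros k. rewrite H2, Nat.add_1_r. reflexivity.
Qed.

Theorem theorem7 :
  (I_beta 1 = 0%nat /\
   forall k : nat, DeltaW I_beta k = Z.of_nat (fixpt mu_I 1%nat k)) /\
  (C_beta 1 = 2%nat /\
   forall k : nat, DeltaW C_beta k = Z.of_nat (proj_C (fixpt mu_C C2 k))) /\
  (D_beta 1 = 6%nat /\
   forall k : nat, DeltaW D_beta k = Z.of_nat (fixpt mu_D 7%nat (S k))).
Proof. exact (conj increase_points (conj constancy_points decrease_points)). Qed.
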